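(* Let $\mathbb{C}[T_0,\dots,T_r]$ carry the $\mathbb{Z}$-grading $\deg T_i=w_i\in\mathbb{Z}_{>0}$, let $f_1,\dots,f_s\in\mathbb{C}[T_0,\dots,T_r]$ be homogeneous polynomials, let $n_0,\dots,n_r>0$, $m\ge0$ be integers, $n=n_0+\dots+n_r$, let $l_i=(l_{i1},\dots,l_{in_i})$ be tuples of positive integers, and set $$g_i:=f_i(T_0^{l_0},\dots,T_r^{l_r})\in\mathbb{C}[T_{ij},S_k],\qquad T_i^{l_i}:=T_{i1}^{l_{i1}}\cdots T_{in_i}^{l_{in_i}},$$ where $\mathbb{C}[T_{ij},S_k]$ is the polynomial ring in $T_{ij}$ ($0\le i\le r$, $1\le j\le n_i$) and $S_1,\dots,S_m$. Then the affine variety $V(g_1,\dots,g_s)\subseteq\mathbb{C}^{n+m}$ is connected. *)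

From HB Require Import structures.
From mathcomp Require Import all_boot all_order all_algebra.
From mathcomp Require Import mpoly.
From mathcomp Require Import all_classical all_reals all_analysis.
From mathcomp Require Import complex.
Import numFieldNormedType.Exports.

Import Order.TTheory GRing.Theory Num.Theory.
Local Open Scope ring_scope.

(* The complex numbers: C = R[i] for a real type R; the copy (R[i])^o carries
   the Euclidean (modulus-induced) topology of a numFieldType.  *)
Notation Cx R := ((R[i])^o).

Definition whomog (R : realType) (k : nat) (w : 'I_k -> nat)
    (p : mpoly.mpoly k (Cx R)) : Prop :=
  exists d : nat, forall mo : mpoly.multinom k, mo \in mpoly.msupp p ->
    (\sum_(i < k) w i * mo i)%N = d.

(* Variables of C[T_ij, S_k]: T_ij for i < r+1, j < n_i (0-based), and S_k, k < m. *)
Definition varT (r : nat) (n : 'I_r.+1 -> nat) (m : nat) : finType :=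
  ({i : 'I_r.+1 & 'I_(n i)} + 'I_m)%type.

Definition nvars r n m := #|varT r n m|.

Definition Xv (R : realType) r n m (v : varT r n m) :
    mpoly.mpoly (nvars r n m) (Cx R) :=
  mpoly.mpolyX (Cx R) (mpoly.mX (enum_rank v)).

Definition Tpow (R : realType) r n m (l : forall i : 'I_r.+1, 'I_(n i) -> nat)
    (i : 'I_r.+1) : mpoly.mpoly (nvars r n m) (Cx R) :=
  \prod_(j < n i) Xv R r n m (inl (Tagged (fun i => 'I_(n i)) j)) ^+ l i j.

Definition subst_mon (R : realType) r n m (l : forall i : 'I_r.+1, 'I_(n i) -> nat)
    (f : mpoly.mpoly r.+1 (Cx R)) : mpoly.mpoly (nvars r n m) (Cx R) :=
  mpoly.comp_mpoly [tuple Tpow R r n m l i | i < r.+1] f.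

(* The zero set V(g_1,...,g_s) in C^{n+m}, with the product (= Euclidean) topology *)
Definition zero_set (R : realType) (N : nat) (s : nat)
    (g : 'I_s -> mpoly.mpoly N (Cx R)) : set {ptws 'I_N -> Cx R} :=
  [set x | forall k : 'I_s, mpoly.meval x (g k) = 0].

From HB Require Import structures.
From mathcomp Require Import all_boot all_order all_algebra.
From mathcomp Require Import mpoly.
From mathcomp Require Import all_classical all_reals all_analysis.
From mathcomp Require Import complex.
Import numFieldNormedType.Exports.
Import Order.TTheory GRing.Theory Num.Theory.
Local Open Scope ring_scope.
Local Open Scope classical_set_scope.
Local Open Scope complex_scope.

(* Give T_ij the positive weight w_i * prod_(k != i) deg T_k^l_k and S_k the
   weight 1.  Then every T_i^l_i has weight c * w_i with c := prod_k deg T_k^l_k,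
   so each g = f(T_0^l_0, ..., T_r^l_r) is homogeneous and the weighted action
   x |-> z . x of C^* maps V(g_1, ..., g_s) into itself.  Letting z = t run
   through [0, 1] joins every point x of V (at t = 1) to the origin (at t = 0)
   by a path inside V, hence V is connected. *)

Lemma continuous_ptws (T : topologicalType) (I : Type) (U : topologicalType)
    (g : T -> {ptws I -> U}) :
  (forall i, continuous (fun t => g t i)) -> continuous g.
Proof.
move=> cg x; apply/cvg_sup => i.
exact: (@continuous_comp_initial _ T U (fun f : I -> U => f i) g (cg i) x).
Qed.

Lemma connected_paths_to_point (R : realType) (T : topologicalType)
    (V : set T) (p : T) (h : T -> R -> T) :
    (forall x, V x -> continuous (h x)) ->
    (forall x, V x -> h x 0 = p) -> (forall x, V x -> h x 1 = x) ->
    (forall x t, V x -> 0 <= t <= 1 -> V (h x t)) ->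
  connected V.
Proof.
move=> h_cont h0 h1 hV.
have in01 (t : R) : t = 0 \/ t = 1 -> `[0, 1]%classic t.
  by case=> ->; rewrite /= in_itv /= lexx ler01.
have -> : V = \bigcup_(x in V) (h x @` `[0, 1]).
  apply/seteqP; split => [x Vx | _ [x Vx [t t01 <-]]].
  - by exists x => //; exists 1; [apply: in01; right | exact: h1].
  - by apply: hV; rewrite /= in_itv in t01.
apply: bigcup_connected.
  by exists p => x Vx; exists 0; [apply: in01; left | exact: h0].
move=> x Vx; apply: connected_continuous_connected; first exact: segment_connected.
exact/continuous_subspaceT/h_cont.
Qed.

Lemma normc_real (R : rcfType) (t : R) : `|t%:C| = `|t|%:C.
Proof. by rewrite normc_def /= expr0n addr0 sqrtr_sqr. Qed.

Lemma continuous_real_complex (R : realType) :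
  continuous (fun t : R => t%:C : Cx R).
Proof.
move=> t; apply/cvgrPdist_lt => -[e e'] e0.
have := e0; rewrite ltcE /= => /andP[/eqP-> e_gt0].
have : (fun u : R => u) @ t --> t by [].
move/cvgrPdist_lt/(_ _ e_gt0); apply: filterS => u ltue.
by rewrite -rmorphB normc_real -complexr0 ltcR.
Qed.

Section MevalScaling.
Variables (K : comNzRingType) (k : nat).
Local Set Implicit Arguments.
Local Unset Strict Implicit.

Lemma meval_mX (v : 'I_k -> K) i : meval v (mpolyX K (mX i)) = v i.
Proof.
rewrite mevalX (bigD1 i) //= big1 => [|j /negPf ji].
  by rewrite /mX mnmE eqxx expr1 mulr1.
by rewrite /mX mnmE ji expr0.
Qed.

Lemma meval_scale_whomog (w : 'I_k -> nat) (p : mpoly k K) d :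
    (forall mo, mo \in msupp p -> (\sum_(i < k) w i * mo i)%N = d) ->
  forall (z : K) (y : 'I_k -> K),
  meval (fun i => z ^+ w i * y i) p = z ^+ d * meval y p.
Proof.
move=> hp z y; rewrite !mevalE mulr_sumr big_seq [RHS]big_seq.
apply: eq_bigr => mo /hp <-.
under eq_bigr => i _ do rewrite exprMn -exprM.
by rewrite big_split /= prodrXr mulrCA.
Qed.

End MevalScaling.

Section WeightedContraction.
Variables (R : realType) (r : nat) (w : 'I_r.+1 -> nat) (n : 'I_r.+1 -> nat)
  (m : nat) (l : forall i : 'I_r.+1, 'I_(n i) -> nat).
Hypotheses (w_gt0 : forall i, (0 < w i)%N) (n_gt0 : forall i, (0 < n i)%N)
  (l_gt0 : forall i j, (0 < l i j)%N).

Local Set Implicit Arguments.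
Local Unset Strict Implicit.

Local Notation N := (nvars r n m).

Definition Tpow_deg i := (\sum_(j < n i) l i j)%N.

Definition Tpow_deg_prod := (\prod_(i < r.+1) Tpow_deg i)%N.

Definition Tpow_deg_cofactor i := (\prod_(k < r.+1 | k != i) Tpow_deg k)%N.

Definition contraction_weight (v : varT r n m) : nat :=
  match v with
  | inl (existT i _) => (w i * Tpow_deg_cofactor i)%N
  | inr _ => 1%N
  end.

Definition contraction (x : 'I_N -> Cx R) (z : Cx R) : {ptws 'I_N -> Cx R} :=
  fun k => z ^+ contraction_weight (enum_val k) * x k.

Lemma Tpow_deg_gt0 i : (0 < Tpow_deg i)%N.
Proof. by rewrite /Tpow_deg (bigD1 (Ordinal (n_gt0 i))) //= ltn_addr ?l_gt0. Qed.

Lemma contraction_weight_gt0 v : (0 < contraction_weight v)%N.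
Proof.
case: v => [[i j]|] //=; rewrite muln_gt0 w_gt0.
by apply: prodn_cond_gt0 => k _; exact: Tpow_deg_gt0.
Qed.

Lemma meval_contraction_Tpow x z i :
  meval (contraction x z) (Tpow R r n m l i) =
    (z ^+ Tpow_deg_prod) ^+ w i * meval x (Tpow R r n m l i).
Proof.
have -> : (z ^+ Tpow_deg_prod) ^+ w i =
    \prod_(j < n i) z ^+ (w i * Tpow_deg_cofactor i) ^+ l i j.
  rewrite prodrXr -/(Tpow_deg i) -!exprM /Tpow_deg_prod (bigD1 i) //=.
  by congr (_ ^+ _); rewrite [LHS]mulnC mulnCA [RHS]mulnC.
rewrite /Tpow !rmorph_prod -big_split /=; apply: eq_bigr => j _.
by rewrite !rmorphXn /= !meval_mX /contraction enum_rankK exprMn.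
Qed.

Lemma meval_contraction_subst_mon (f : mpoly r.+1 (Cx R)) d :
    (forall mo, mo \in msupp f -> (\sum_(i < r.+1) w i * mo i)%N = d) ->
  forall x z, meval (contraction x z) (subst_mon R r n m l f) =
    (z ^+ Tpow_deg_prod) ^+ d * meval x (subst_mon R r n m l f).
Proof.
move=> hf x z; rewrite /subst_mon !comp_mpoly_meval -(meval_scale_whomog hf).
by apply: meval_eq => i; rewrite !tnth_mktuple meval_contraction_Tpow.
Qed.

Lemma contraction1 x : contraction x 1 = x.
Proof. by apply: funext => k; rewrite /contraction expr1n mul1r. Qed.

Lemma contraction0 x : contraction x 0 = (fun _ => 0).
Proof.
apply: funext => k; rewrite /contraction expr0n.
by rewrite eqn0Ngt contraction_weight_gt0 mul0r.
Qed.

Lemma continuous_contraction_real x :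
  continuous (fun t : R => contraction x t%:C).
Proof.
apply: continuous_ptws => k t; rewrite /contraction.
set e := contraction_weight _.
have -> : (fun u : R => u%:C ^+ e * x k) = (fun u : R => (u ^+ e)%:C * x k).
  by apply: funext => u; rewrite rmorphXn.
apply: (@continuousZr_tmp _ _ _ (fun u : R => (u ^+ e)%:C : Cx R)).
apply: (@continuous_comp _ _ _ (fun u : R => u ^+ e) (fun u : R => u%:C : Cx R)).
  exact: exprn_continuous.
exact: continuous_real_complex.
Qed.

End WeightedContraction.

Theorem lemma3p8 (R : realType) (r : nat) (w : 'I_r.+1 -> nat)
    (hw : forall i, (0 < w i)%N)
    (s : nat) (f : 'I_s -> mpoly.mpoly r.+1 (Cx R))
    (hf : forall k, whomog R r.+1 w (f k))
    (n : 'I_r.+1 -> nat) (hn : forall i, (0 < n i)%N) (m : nat)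
    (l : forall i : 'I_r.+1, 'I_(n i) -> nat)
    (hl : forall i j, (0 < l i j)%N) :
  connected (zero_set R (nvars r n m) s (fun k => subst_mon R r n m l (f k))).
Proof.
set V := zero_set _ _ _ _.
have V_contraction x z : V x -> V (contraction w l x z).
  move=> Vx k; have [d hd] := hf k.
  by rewrite (meval_contraction_subst_mon l hd) Vx mulr0.
apply: (@connected_paths_to_point R _ V (fun _ => 0)
          (fun x t => contraction w l x t%:C)) => [x _|x _|x _|x t Vx _].
- exact: continuous_contraction_real.
- by rewrite rmorph0 (contraction0 hw hn hl).
- by rewrite rmorph1 contraction1.
- exact: V_contraction.
Qed.
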